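(* Let $p$ be an odd prime, let $q\in\mathbb{C}_p$ with $|1-q|_p<1$, let $h\in\mathbb{Z}$, $r\in\mathbb{N}$, and let $w_1,w_2\in\mathbb{N}$ with $w_1\equiv 1\pmod 2$ and $w_2\equiv 1\pmod 2$. Then, for $x\in\mathbb{Z}_p$, \[ \begin{split} &\sum_{j_1,\dots,j_r=0}^{w_1-1}(-1)^{\sum_{l=1}^r j_l}\,q^{w_2\sum_{l=1}^r(h-l)j_l}\int_{\mathbb{Z}_p}\!\cdots\!\int_{\mathbb{Z}_p} q^{w_1\sum_{l=1}^r(h-l)y_l}\, e^{[w_1]_q\left[w_2x+\frac{w_2}{w_1}\sum_{l=1}^r j_l+\sum_{l=1}^r y_l\right]_{q^{w_1}}t}\,d\mu_{-1}(y_1)\cdots d\mu_{-1}(y_r)\\ &=\sum_{j_1,\dots,j_r=0}^{w_2-1}(-1)^{\sum_{l=1}^r j_l}\,q^{w_1\sum_{l=1}^r(h-l)j_l}\int_{\mathbb{Z}_p}\!\cdots\!\int_{\mathbb{Z}_p} q^{w_2\sum_{l=1}^r(h-l)y_l}\, e^{[w_2]_q\left[w_1x+\frac{w_1}{w_2}\sum_{l=1}^r j_l+\sum_{l=1}^r y_l\right]_{q^{w_2}}t}\,d\mu_{-1}(y_1)\cdots d\mu_{-1}(y_r). \end{split} \]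
   Context: $\mathbb{Z}_p$ denotes the $p$-adic integers and $\mathbb{C}_p$ the completion of the algebraic closure of $\mathbb{Q}_p$. For $q\in\mathbb{C}_p$ with $|1-q|_p<1$, the $q$-number is $[x]_q=\frac{1-q^x}{1-q}$; for $w\in\mathbb{N}$, $[z]_{q^w}=\frac{1-q^{wz}}{1-q^w}$ (in all occurrences the exponent $wz$ is a $p$-adic integer). For a continuous function $f$ on $\mathbb{Z}_p$, the $p$-adic fermionic integral is $\int_{\mathbb{Z}_p}f(y)\,d\mu_{-1}(y)=\lim_{N\to\infty}\sum_{y=0}^{p^N-1}f(y)(-1)^y$, and the multivariate integral $\int_{\mathbb{Z}_p}\cdots\int_{\mathbb{Z}_p}\,d\mu_{-1}(y_1)\cdots d\mu_{-1}(y_r)$ is the iterated fermionic integral in the variables $y_1,\dots,y_r$. The identity is between formal power series in $t$ (equivalently, coefficientwise in $t$). *)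

From HB Require Import structures.
From mathcomp Require Import all_boot all_order all_algebra.
From mathcomp Require Import reals.
From Stdlib Require Import ClassicalEpsilon.
Set Implicit Arguments. Unset Strict Implicit. Unset Printing Implicit Defensive.
Import Order.TTheory GRing.Theory Num.Theory.
Local Open Scope ring_scope.

Section PadicSetting.
Variables (R : realType) (K : fieldType) (abs : K -> R).

Definition cvgK (u : nat -> K) (l : K) : Prop :=
  forall e : R, 0 < e -> exists N : nat, forall n : nat, (N <= n)%N -> abs (u n - l) < e.

Definition cauchyK (u : nat -> K) : Prop :=
  forall e : R, 0 < e -> exists N : nat,
    forall m n : nat, (N <= m)%N -> (N <= n)%N -> abs (u m - u n) < e.

(* abs is a complete non-archimedean absolute value on the characteristic-0
   field K with |p| < 1 ; such a K is a complete extension of Q_p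
   (C_p is an instance). *)
Definition padic_abs (p : nat) : Prop :=
  [pchar K] =i pred0
  /\ (forall x : K, 0 <= abs x)
  /\ (forall x : K, abs x = 0 <-> x = 0)
  /\ (forall x y : K, abs (x * y) = abs x * abs y)
  /\ (forall x y : K, abs (x + y) <= Num.max (abs x) (abs y))
  /\ abs (p%:R) < 1
  /\ (forall u : nat -> K, cauchyK u -> exists l, cvgK u l).

Definition in_Zp (x : K) : Prop :=
  exists u : nat -> int, cvgK (fun k => (u k)%:~R) x.

Definition is_qpow (q x y : K) : Prop :=
  forall u : nat -> int, cvgK (fun k => (u k)%:~R) x -> cvgK (fun k => q ^ (u k)) y.

Definition qpow (q x : K) : K := epsilon (inhabits 0) (is_qpow q x).

(* q-numbers: [x]_q = (1 - q^x)/(1 - q), and [z]_{q^w} = (1 - q^(w z))/(1 - q^w). *)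
Definition qnum (q x : K) : K := (1 - qpow q x) / (1 - q).
Definition qnumw (q : K) (w : nat) (z : K) : K :=
  (1 - qpow q (w%:R * z)) / (1 - q ^+ w).

(* p-adic fermionic integral: lim_N sum_{y=0}^{p^N-1} f(y) (-1)^y
   (only the values of f at the integers y enter the definition). *)
Definition fint (p : nat) (f : nat -> K) : K :=
  epsilon (inhabits 0)
    (cvgK (fun N => \sum_(y < p ^ N) f y * (-1) ^+ y)).

(* Iterated fermionic integral in the variables ys 0, ..., ys (r-1)
   (ys i stands for y_(i+1)); y_1 is innermost, y_r outermost. *)
Fixpoint fintn (p : nat) (r : nat) (F : (nat -> nat) -> K) : K :=
  match r with
  | 0 => F (fun _ => 0%N)
  | r'.+1 => fint p (fun y =>
      fintn p r' (fun ys => F (fun l => if l == r' then y else ys l)))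
  end.

End PadicSetting.

(* Coefficient of t^n/... : the coefficient of t^n of the side of the identity,
   i.e. sum_j (-1)^(sum j) q^(w' sum (h-l) j_l)
        int ... int q^(w sum (h-l) y_l) ([w]_q [w' x + (w'/w) sum j + sum y]_{q^w})^n / n!  *)
Definition side_coef (R : realType) (K : fieldType) (abs : K -> R)
    (p : nat) (q : K) (h : int) (r w w' : nat) (x : K) (n : nat) : K :=
  \sum_(j : {ffun 'I_r -> 'I_w})
    ((-1) ^+ (\sum_(i < r) (j i : nat))
     * q ^ ((w' : int) * (\sum_(i < r) (h - (i.+1 : int)) * (j i : int)))
     * fintn abs p r (fun ys =>
         qpow abs q (w%:R * (\sum_(i < r) (h - (i.+1 : int))%:~R * (ys i)%:R))
         * (qnum abs q (w%:R) *
            qnumw abs q w (w'%:R * x + (w'%:R / w%:R) * (\sum_(i < r) ((j i : nat)%:R))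
                           + (\sum_(i < r) (ys i)%:R))) ^+ n
         / (n`!)%:R)).

From HB Require Import structures.
From mathcomp Require Import all_boot all_order all_algebra.
From mathcomp Require Import reals.
From mathcomp Require Import ring lra.
From Stdlib Require Import ClassicalEpsilon FunctionalExtensionality.
Set Implicit Arguments. Unset Strict Implicit. Unset Printing Implicit Defensive.
Import Order.TTheory GRing.Theory Num.Theory.
Local Open Scope ring_scope.

(* Both sides are computed in closed form.  Since |1 - q| < 1, the binomial
   theorem gives |z^p - 1| <= max(|p| |z - 1|, |z - 1|^p) for |z| = 1, so q^(p^N)
   tends to 1: hence q^x is well defined on Z_p, with q^(x + m) = q^x q^m, and
   the fermionic integral of y |-> q^(a y) is
     lim (1 + q^(a p^N)) / (1 + q^a) = 2 / (1 + q^a)     (p^N is odd).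
   Expanding the n-th power of the q-number binomially, the coefficient of t^n
   becomes a sum over k of terms depending on w1, w2 only through w1 w2, times a
   product over l of
     (sum_(j < w) (-1)^j q^(w' b j)) * 2 / (1 + q^(w b))
       = 2 (1 + q^(w w' b)) / ((1 + q^(w' b)) (1 + q^(w b)))
   with b = h - l + k, which is symmetric in w, w' because w and w' are odd. *)

Lemma alt_geom_sum (K : fieldType) (z : K) n : odd n -> 1 + z != 0 ->
  \sum_(t < n) (-1) ^+ t * z ^+ t = (1 + z ^+ n) / (1 + z).
Proof.
move=> n_odd z1_neq0; apply: (mulfI z1_neq0); rewrite [RHS]mulrC divfK //.
under eq_bigr do rewrite -exprMn mulN1r.
have := subrX1 (- z) n; rewrite exprNn -signr_odd n_odd expr1 mulN1r => geom.
have -> : 1 + z ^+ n = - (- z ^+ n - 1) by ring.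
by rewrite geom; ring.
Qed.

Lemma exprz_sum (K : fieldType) (x : K) I (r : seq I) (F : I -> int) : x != 0 ->
  x ^ (\sum_(i <- r) F i) = \prod_(i <- r) x ^ F i.
Proof.
by move=> x_neq0; apply: (big_morph (fun m => x ^ m)) => [m1 m2|]; rewrite ?expfzDr.
Qed.

Lemma Posz_sum I (r : seq I) (F : I -> nat) :
  ((\sum_(i <- r) F i)%N : int) = \sum_(i <- r) (F i : int).
Proof. exact: (big_morph Posz). Qed.

Lemma expand_scaled_binomial (K : fieldType) n (P Y Z c : K) :
  P * ((1 - Y * Z) / c) ^+ n / (n`!)%:R
  = \sum_(k < n.+1) ('C(n, k)%:R * (- Y) ^+ k / (c ^+ n * (n`!)%:R)) * (P * Z ^+ k).
Proof.
rewrite expr_div_n (addrC 1) -mulNr exprD1n !mulr_suml mulr_sumr mulr_suml.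
by apply: eq_bigr => k _; rewrite exprMn -mulr_natr invfM; ring.
Qed.

Lemma exprn_small (F : archiRealFieldType) (c e : F) :
  0 <= c -> c < 1 -> 0 < e -> exists N, c ^+ N < e.
Proof.
move=> c_ge0 c_lt1 e_gt0; have [->|c_neq0] := eqVneq c 0.
  by exists 1%N; rewrite expr1.
have c_gt0 : 0 < c by rewrite lt_def c_neq0 c_ge0.
set t := c^-1 - 1.
have t_gt0 : 0 < t by rewrite subr_gt0 invf_gt1.
have bernoulli (N : nat) : 1 + N%:R * t <= (1 + t) ^+ N.
  elim: N => [|N IH]; first by rewrite mul0r addr0 expr0.
  have Nt_ge0 : 0 <= N%:R * t by rewrite mulr_ge0 // ltW.
  have : (1 + t) * (1 + N%:R * t) <= (1 + t) * (1 + t) ^+ N.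
    by rewrite ler_pM2l // ltr_wpDr // ltW.
  by rewrite exprS -natr1; apply: le_trans; nra.
have bound_ge0 : 0 <= e^-1 / t by rewrite divr_ge0 // ltW // invr_gt0.
set N := Num.Def.archi_bound (e^-1 / t); exists N.
have : e^-1 < (1 + t) ^+ N.
  apply: lt_le_trans (bernoulli N); rewrite ltr_pwDl //.
  rewrite -[e^-1](divfK (lt0r_neq0 t_gt0)) (ler_pM2r t_gt0) ltW //.
  exact: archi_boundP.
rewrite addrC subrK exprVn -(ltf_pV2 (x := e)) ?posrE ?exprn_gt0 //.
Qed.

(** * Ultrametric absolute values *)

Section PadicAbs.

Variables (R : realType) (K : fieldType) (abs : K -> R).
Hypothesis abs_ge0 : forall x, 0 <= abs x.
Hypothesis abs_eq0 : forall x, abs x = 0 <-> x = 0.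
Hypothesis absM : forall x y, abs (x * y) = abs x * abs y.
Hypothesis absD : forall x y, abs (x + y) <= Num.max (abs x) (abs y).

Lemma abs0 : abs 0 = 0.
Proof. exact: (abs_eq0 0).2. Qed.

Lemma abs_gt0 x : x != 0 -> 0 < abs x.
Proof.
by move=> x_neq0; rewrite lt_def abs_ge0 andbT; apply: contra x_neq0 => /eqP/abs_eq0 ->.
Qed.

Lemma abs1 : abs 1 = 1.
Proof.
have abs1_neq0 : abs 1 != 0 by rewrite gt_eqF ?abs_gt0 ?oner_neq0.
by apply: (mulfI abs1_neq0); rewrite mulr1 -absM mulr1.
Qed.

Lemma abs_eq1_neq0 x : abs x = 1 -> x != 0.
Proof. by apply: contra_eqN => /eqP ->; rewrite abs0 eq_sym oner_eq0. Qed.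

Lemma absN1 : abs (-1) = 1.
Proof.
have := absM (-1) (-1); rewrite mulrNN mulr1 abs1.
by have := abs_ge0 (-1); nra.
Qed.

Lemma absN x : abs (- x) = abs x.
Proof. by rewrite -mulN1r absM absN1 mul1r. Qed.

Lemma abs_distrC x y : abs (x - y) = abs (y - x).
Proof. by rewrite -absN opprB. Qed.

Lemma absD_le x y e : abs x <= e -> abs y <= e -> abs (x + y) <= e.
Proof. by move=> hx hy; apply: le_trans (absD x y) _; rewrite ge_max hx hy. Qed.

Lemma absD_lt x y e : abs x < e -> abs y < e -> abs (x + y) < e.
Proof. by move=> hx hy; apply: le_lt_trans (absD x y) _; rewrite gt_max hx hy. Qed.

Lemma abs_sum_le (I : Type) (s : seq I) (F : I -> K) e :
  0 <= e -> (forall i, abs (F i) <= e) -> abs (\sum_(i <- s) F i) <= e.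
Proof.
move=> e_ge0 hF; elim: s => [|i s IH]; first by rewrite big_nil abs0.
by rewrite big_cons absD_le.
Qed.

Lemma abs_natr_le1 n : abs n%:R <= 1.
Proof.
elim: n => [|n IH]; first by rewrite abs0.
by rewrite -natr1 absD_le ?abs1.
Qed.

Lemma abs_intr_le1 (m : int) : abs m%:~R <= 1.
Proof. by case: m => n; rewrite ?NegzE ?rmorphN /= ?absN abs_natr_le1. Qed.

Lemma absD_dominant x y : abs y < abs x -> abs (x + y) = abs x.
Proof.
move=> y_lt_x; apply/le_anti; rewrite (le_trans (absD x y)) ?ge_max ?lexx ?(ltW y_lt_x) //=.
have := absD (x + y) (- y); rewrite addrK absN le_max => /orP[//|x_le_y].
by move: (lt_le_trans y_lt_x x_le_y); rewrite ltxx.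
Qed.

Lemma absX x n : abs (x ^+ n) = abs x ^+ n.
Proof. by elim: n => [|n IH]; rewrite ?abs1 // !exprS absM IH. Qed.

Lemma absV x : x != 0 -> abs x^-1 = (abs x)^-1.
Proof.
move=> x_neq0; have absx_neq0 := lt0r_neq0 (abs_gt0 x_neq0).
by apply: (mulfI absx_neq0); rewrite -absM !mulfV // abs1.
Qed.

Lemma abs_exprz_eq1 z (m : int) : abs z = 1 -> abs (z ^ m) = 1.
Proof.
move=> z1; case: m => n; first by rewrite -exprnP absX z1 expr1n.
by rewrite NegzE -exprnN absV ?expf_neq0 ?abs_eq1_neq0 // absX z1 expr1n invr1.
Qed.

Lemma abs_exprn_sub1_le z n : abs z = 1 -> abs (z ^+ n - 1) <= abs (z - 1).
Proof.
move=> z1; elim: n => [|n IH]; first by rewrite expr0 subrr abs0.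
have -> : z ^+ n.+1 - 1 = (z ^+ n - 1) * z + (z - 1) by rewrite exprSr; ring.
by rewrite absD_le // absM z1 mulr1.
Qed.

Lemma abs_exprz_sub1_le z (m : int) : abs z = 1 -> abs (z ^ m - 1) <= abs (z - 1).
Proof.
move=> z1; case: m => n; first by rewrite -exprnP abs_exprn_sub1_le.
have zn_neq0 : z ^+ n.+1 != 0 by rewrite expf_neq0 ?abs_eq1_neq0.
rewrite NegzE -exprnN.
have -> : (z ^+ n.+1)^-1 - 1 = - ((z ^+ n.+1 - 1) * (z ^+ n.+1)^-1).
  by rewrite mulrBl mulfV // mul1r opprB.
by rewrite absN absM absV // absX z1 expr1n invr1 mulr1 abs_exprn_sub1_le.
Qed.

Lemma eq_of_abs_sub_small a b : (forall e : R, 0 < e -> abs (a - b) < e) -> a = b.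
Proof.
move=> small; apply/eqP; rewrite -subr_eq0; apply/negPn/negP => /abs_gt0 /small.
by rewrite ltxx.
Qed.

Lemma cvgK_unique u l l' : cvgK abs u l -> cvgK abs u l' -> l = l'.
Proof.
move=> ul ul'; apply: eq_of_abs_sub_small => e e_gt0.
have [N1 H1] := ul e e_gt0; have [N2 H2] := ul' e e_gt0.
have -> : l - l' = (u (maxn N1 N2) - l') - (u (maxn N1 N2) - l) by ring.
by rewrite absD_lt ?absN ?H1 ?H2 ?leq_maxl ?leq_maxr.
Qed.

Lemma cvgK_scale c u l : cvgK abs u l -> cvgK abs (fun N => c * u N) (c * l).
Proof.
move=> ul e e_gt0; have [->|c_neq0] := eqVneq c 0.
  by exists 0%N => n _; rewrite !mul0r subrr abs0.
have c_gt0 := abs_gt0 c_neq0.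
have [N HN] := ul (e / abs c) (divr_gt0 e_gt0 c_gt0); exists N => n Nn.
by rewrite -mulrBr absM mulrC -ltr_pdivlMr // HN.
Qed.

Lemma cvgK_add u v l m : cvgK abs u l -> cvgK abs v m ->
  cvgK abs (fun N => u N + v N) (l + m).
Proof.
move=> ul vm e e_gt0; have [N1 H1] := ul e e_gt0; have [N2 H2] := vm e e_gt0.
exists (maxn N1 N2) => n; rewrite geq_max => /andP[n1 n2].
have -> : u n + v n - (l + m) = (u n - l) + (v n - m) by ring.
by rewrite absD_lt ?H1 ?H2.
Qed.

Lemma cvgK_sum n (f : nat -> nat -> K) (l : nat -> K) :
  (forall k, cvgK abs (f k) (l k)) ->
  cvgK abs (fun N => \sum_(k < n) f k N) (\sum_(k < n) l k).
Proof.
move=> fl; elim: n => [|n IH].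
  by move=> e e_gt0; exists 0%N => N _; rewrite !big_ord0 subrr abs0.
move=> e e_gt0; have [N HN] := cvgK_add IH (fl n) e_gt0.
by exists N => m Nm; rewrite !big_ord_recr; apply: HN.
Qed.


(** * Consequences of |p| < 1 *)

Variable p : nat.
Hypotheses (p_prime : prime p) (p_odd : odd p).
Hypothesis K_char0 : [pchar K] =i pred0.
Hypothesis absp_lt1 : abs p%:R < 1.

Lemma natrK_eq0 n : ((n%:R : K) == 0) = (n == 0)%N.
Proof. exact: (pcharf0P K).1 K_char0 n. Qed.

Lemma absp_gt0 : 0 < abs p%:R.
Proof. by rewrite abs_gt0 // natrK_eq0 -lt0n prime_gt0. Qed.

Lemma abs_intr_eq1 (m : int) : ~~ ((p : int) %| m)%Z -> abs m%:~R = 1.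
Proof.
move=> p_ndvd_m; have p_coprime_m : coprime p `|m|%N.
  by rewrite prime_coprime // -dvdzE.
have [u [v bezout]] := Bezoutz p m; rewrite /gcdz /= (eqP p_coprime_m) in bezout.
have one_eq : (1 : K) = u%:~R * p%:R + v%:~R * m%:~R.
  by rewrite -[p%:R]/((p : int)%:~R) -!intrM -intrD bezout.
apply/le_anti; rewrite abs_intr_le1 /= leNgt; apply/negP => absm_lt1.
suff : abs (1 : K) < 1 by rewrite abs1 ltxx.
rewrite one_eq absD_lt // absM.
  by rewrite (le_lt_trans _ absp_lt1) // ler_piMl ?abs_intr_le1.
by rewrite (le_lt_trans _ absm_lt1) // ler_piMl ?abs_intr_le1.
Qed.

Lemma abs2 : abs 2 = 1.
Proof.
rewrite -[2 : K]/((2 : int)%:~R) abs_intr_eq1 // dvdzE /= dvdn_prime2 //.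
by apply: contraL p_odd => /eqP ->.
Qed.

Lemma dvdz_of_abs_lt M (m : int) :
  abs m%:~R < abs p%:R ^+ M -> ((p : int) ^+ M %| m)%Z.
Proof.
elim: M m => [|M IH] m absm_lt; first by rewrite expr0 dvd1z.
have /IH /dvdzP [k m_eq] : abs m%:~R < abs p%:R ^+ M.
  by rewrite (lt_le_trans absm_lt) // exprSr ger_pMr ?exprn_gt0 ?absp_gt0 ?ltW.
have absm_eq : abs m%:~R = abs k%:~R * abs p%:R ^+ M.
  by rewrite m_eq intrM absM rmorphXn /= absX.
have absk_lt : abs k%:~R < abs p%:R.
  by rewrite -(ltr_pM2r (exprn_gt0 M absp_gt0)) -absm_eq mulrC -exprSr.
rewrite m_eq exprSr mulrC dvdz_mul //.
by apply: contraLR absk_lt => /abs_intr_eq1 ->; rewrite -leNgt ltW.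
Qed.

(* Binomial expansion of ((w - 1) + 1)^p: p divides the inner binomial coefficients. *)
Lemma abs_exprp_sub1_le w d : abs (w - 1) <= d -> 0 <= d -> d <= 1 ->
  abs (w ^+ p - 1) <= Num.max (abs p%:R * d) (d ^+ p).
Proof.
move=> absw_le d_ge0 d_le1.
rewrite -[w](subrK 1) exprD1n big_ord_recl expr0 bin0 mulr1n addrC addKr.
apply: abs_sum_le => [|i]; first by rewrite le_max mulr_ge0.
have absX_le : abs ((w - 1) ^+ i.+1) <= d ^+ i.+1 by rewrite absX lerXn2r ?nnegrE.
case: (ltngtP i.+1 p) => [i_lt_p|p_lt_i|i_eq_p].
- have /dvdnP [k ->] : (p %| 'C(p, i.+1))%N by rewrite prime_dvd_bin // i_lt_p.
  rewrite le_max -mulr_natr natrM absM mulrC ler_pM //.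
    by rewrite absM ler_piMl ?abs_natr_le1.
  by rewrite (le_trans absX_le) // exprS ler_piMr ?exprn_ile1.
- by move: (leq_trans p_lt_i (ltn_ord i)); rewrite ltnn.
- by rewrite -[lift ord0 i : nat]/(i.+1) i_eq_p binn mulr1n le_max -i_eq_p absX_le orbT.
Qed.

Lemma exprpn_near1 z : abs z = 1 -> abs (z - 1) < 1 ->
  forall e : R, 0 < e -> exists N, forall n, (N <= n)%N -> abs (z ^+ (p ^ n) - 1) < e.
Proof.
move=> absz_eq1 d_lt1 e e_gt0.
set d := abs (z - 1); set c := Num.max (abs p%:R) (d ^+ p.-1).
have d_ge0 : 0 <= d := abs_ge0 _.
have c_ge0 : 0 <= c by rewrite le_max abs_ge0.
have c_lt1 : c < 1.
  by rewrite gt_max absp_lt1 exprn_ilt1 ?abs_ge0 //= -lt0n -ltnS prednK ?prime_gt1 ?prime_gt0.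
have contraction N : abs (z ^+ (p ^ N) - 1) <= c ^+ N * d.
  elim: N => [|N IH]; first by rewrite expn0 expr1 expr0 mul1r.
  have dN_ge0 : 0 <= c ^+ N * d by rewrite mulr_ge0 ?exprn_ge0.
  have dN_le : c ^+ N * d <= d by rewrite ler_piMl // exprn_ile1 // ltW.
  have dN_le1 := le_trans dN_le (ltW d_lt1).
  rewrite expnSr exprM (le_trans (abs_exprp_sub1_le IH dN_ge0 dN_le1)) //.
  rewrite ge_max; apply/andP; split.
    have : abs p%:R <= c by rewrite le_max lexx.
    by rewrite exprSr; nra.
  have : (c ^+ N * d) ^+ p.-1 <= c.
    by rewrite (le_trans (lerXn2r _ _ _ dN_le)) ?nnegrE ?le_max ?lexx ?orbT.
  by rewrite -(prednK (prime_gt0 p_prime)) exprS exprSr; nra.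
have [N cN_lt] := exprn_small c_ge0 c_lt1 e_gt0.
exists N => n Nn; rewrite -(subnKC Nn) expnD exprM.
have absz_pN : abs (z ^+ (p ^ N)) = 1 by rewrite absX absz_eq1 expr1n.
rewrite (le_lt_trans (abs_exprn_sub1_le _ absz_pN)) // (le_lt_trans (contraction N)) //.
by rewrite (le_lt_trans _ cN_lt) // ler_piMr ?exprn_ge0 // ltW.
Qed.

Lemma fint_cvg (f : nat -> K) l :
  cvgK abs (fun N => \sum_(y < p ^ N) f y * (-1) ^+ y) l -> fint abs p f = l.
Proof.
by move=> fl; apply: (cvgK_unique _ fl); apply: epsilon_spec; exists l.
Qed.

Lemma abs_intrB_lt (a b : int) A d :
  abs (a%:~R - A) < d -> abs (b%:~R - A) < d -> abs (a - b)%:~R < d.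
Proof.
have -> : (a - b)%:~R = (a%:~R - A) - (b%:~R - A) :> K by rewrite intrB; ring.
by move=> aA bA; rewrite absD_lt ?absN.
Qed.

(** * Powers of q on Z_p *)

Variable q : K.
Hypothesis absq_sub1 : abs (1 - q) < 1.

Lemma absq : abs q = 1.
Proof.
have -> : q = 1 + - (1 - q) by ring.
by rewrite absD_dominant ?absN abs1.
Qed.

Lemma q_neq0 : q != 0.
Proof. exact: abs_eq1_neq0 absq. Qed.

Lemma abs_exprqz (m : int) : abs (q ^ m) = 1.
Proof. exact: abs_exprz_eq1 absq. Qed.

Lemma abs_exprqz_sub1_lt1 (m : int) : abs (q ^ m - 1) < 1.
Proof. by rewrite (le_lt_trans (abs_exprz_sub1_le _ absq)) // abs_distrC. Qed.

Lemma abs_1Dexprqz (m : int) : abs (1 + q ^ m) = 1.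
Proof.
have -> : 1 + q ^ m = 2 + (q ^ m - 1) by ring.
by rewrite absD_dominant abs2 // abs_exprqz_sub1_lt1.
Qed.

Lemma oneDexprqz_neq0 (m : int) : 1 + q ^ m != 0.
Proof. exact: abs_eq1_neq0 (abs_1Dexprqz m). Qed.

Lemma exprqz_near e : 0 < e -> exists2 d, 0 < d &
  forall a b : int, abs (a - b)%:~R < d -> abs (q ^ a - q ^ b) < e.
Proof.
move=> e_gt0; have [M HM] := exprpn_near1 absq (abs_exprqz_sub1_lt1 1) e_gt0.
exists (abs p%:R ^+ M); first by rewrite exprn_gt0 // absp_gt0.
move=> a b /dvdz_of_abs_lt /dvdzP [k ab_eq].
have -> : q ^ a = q ^ b * q ^ (a - b) by rewrite -expfzDr ?q_neq0 // subrKC.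
rewrite -{2}[q ^ b]mulr1 -mulrBr absM abs_exprqz mul1r ab_eq mulrC -exprz_exp.
have -> : (p : int) ^+ M = (p ^ M)%N by rewrite -!natz natrX.
rewrite -exprnP (le_lt_trans (abs_exprz_sub1_le _ _)) ?HM //.
by rewrite absX absq expr1n.
Qed.

Lemma in_Zp_intr (m : int) : in_Zp abs m%:~R.
Proof. by exists (fun=> m) => e e_gt0; exists 0%N => n _; rewrite subrr abs0. Qed.

Lemma in_Zp_natrM n x : in_Zp abs x -> in_Zp abs (n%:R * x).
Proof.
case=> u ux; exists (fun k => n%:Z * u k) => e /ux [N HN]; exists N => m /HN.
rewrite intrM -mulrBr absM; apply: le_lt_trans.
by rewrite ler_piMl ?abs_natr_le1.
Qed.

Lemma is_qpow_unique A y y' :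
  in_Zp abs A -> is_qpow abs q A y -> is_qpow abs q A y' -> y = y'.
Proof. by case=> u uA /(_ u uA) uy /(_ u uA); apply: cvgK_unique. Qed.

Lemma is_qpow_intr (m : int) : is_qpow abs q m%:~R (q ^ m).
Proof.
move=> u um e e_gt0; have [d d_gt0 Hd] := exprqz_near e_gt0.
have [N HN] := um d d_gt0; exists N => n Nn.
by rewrite Hd // intrB HN.
Qed.

Lemma is_qpowD_intr A y (m : int) :
  is_qpow abs q A y -> is_qpow abs q (A + m%:~R) (y * q ^ m).
Proof.
move=> Ay v vAm.
have uA : cvgK abs (fun k => (v k - m)%:~R) A.
  move=> e /vAm [N HN]; exists N => n Nn.
  have -> : (v n - m)%:~R - A = (v n)%:~R - (A + m%:~R) :> K by rewrite intrB; ring.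
  exact: HN.
move=> e e_gt0; have [N HN] := cvgK_scale (q ^ m) (Ay _ uA) e_gt0.
exists N => n /HN; rewrite -expfzDr ?q_neq0 // subrKC.
by rewrite [y * _]mulrC.
Qed.

Hypothesis K_complete : forall u : nat -> K, cauchyK abs u -> exists l, cvgK abs u l.

Lemma is_qpow_exists A : in_Zp abs A -> exists y, is_qpow abs q A y.
Proof.
case=> u uA.
have [y uy] : exists y, cvgK abs (fun k => q ^ u k) y.
  apply: K_complete => e /exprqz_near [d d_gt0 Hd].
  have [N HN] := uA d d_gt0; exists N => m n Nm Nn.
  exact/Hd/(abs_intrB_lt (HN m Nm) (HN n Nn)).
exists y => v vA e e_gt0; have [d d_gt0 Hd] := exprqz_near e_gt0.
have [N1 H1] := uA d d_gt0; have [N2 H2] := vA d d_gt0; have [N3 H3] := uy e e_gt0.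
exists (maxn N1 (maxn N2 N3)) => n; rewrite !geq_max => /and3P[n1 n2 n3].
have -> : q ^ v n - y = (q ^ v n - q ^ u n) + (q ^ u n - y) by ring.
by rewrite absD_lt ?H3 // Hd // (abs_intrB_lt (H2 n n2) (H1 n n1)).
Qed.

Lemma qpowP A : in_Zp abs A -> is_qpow abs q A (qpow abs q A).
Proof. by move=> /is_qpow_exists; apply: epsilon_spec. Qed.

Lemma qpow_intr (m : int) : qpow abs q m%:~R = q ^ m.
Proof.
have Zpm := @in_Zp_intr m.
exact: is_qpow_unique Zpm (qpowP Zpm) (@is_qpow_intr m).
Qed.

Lemma qpowD_intr A (m : int) : in_Zp abs A ->
  qpow abs q (A + m%:~R) = qpow abs q A * q ^ m.
Proof.
move=> ZpA; have ZpAm : in_Zp abs (A + m%:~R).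
  case: ZpA => u uA; exists (fun k => u k + m) => e /uA [N HN].
  by exists N => n /HN; rewrite intrD opprD addrACA subrr addr0.
exact: is_qpow_unique ZpAm (qpowP ZpAm) (is_qpowD_intr (qpowP ZpA)).
Qed.

(** * Fermionic integrals of exponentials *)

Definition qexp_fint (a : int) : K := 2 / (1 + q ^ a).

Lemma cvg_fint_qexp (a : int) :
  cvgK abs (fun N => \sum_(y < p ^ N) q ^ (a * y) * (-1) ^+ y) (qexp_fint a).
Proof.
have partial_sum N : \sum_(y < p ^ N) q ^ (a * y) * (-1) ^+ y
                     = (1 + (q ^ a) ^+ (p ^ N)) / (1 + q ^ a).
  rewrite -alt_geom_sum ?oddX ?p_odd ?orbT ?oneDexprqz_neq0 //.
  by apply: eq_bigr => y _; rewrite mulrC -exprz_exp -exprnP.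
move=> e e_gt0; have [N HN] := exprpn_near1 (abs_exprqz a) (abs_exprqz_sub1_lt1 a) e_gt0.
exists N => n /HN; rewrite partial_sum /qexp_fint -mulrBl absM absV ?oneDexprqz_neq0 //.
have -> : 1 + (q ^ a) ^+ (p ^ n) - 2 = (q ^ a) ^+ (p ^ n) - 1 by ring.
by rewrite abs_1Dexprqz invr1 mulr1.
Qed.

Lemma fint_sum_qexp n (d : nat -> K) (b : nat -> int) :
  fint abs p (fun y => \sum_(k < n) d k * q ^ (b k * y))
  = \sum_(k < n) d k * qexp_fint (b k).
Proof.
apply: fint_cvg.
suff -> : (fun N => \sum_(y < p ^ N) (\sum_(k < n) d k * q ^ (b k * y)) * (-1) ^+ y)
        = (fun N => \sum_(k < n) d k * \sum_(y < p ^ N) q ^ (b k * y) * (-1) ^+ y).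
  exact: cvgK_sum (fun k => cvgK_scale (d k) (cvg_fint_qexp (b k))).
apply: functional_extensionality => N.
under eq_bigr do rewrite mulr_suml.
rewrite exchange_big /=; apply: eq_bigr => k _; rewrite mulr_sumr.
by apply: eq_bigr => y _; rewrite mulrA.
Qed.

Lemma fintn_sum_prod_qexp r n (c : nat -> K) (a : nat -> nat -> int) :
  fintn abs p r (fun ys => \sum_(k < n) c k * \prod_(i < r) q ^ (a k i * ys i))
  = \sum_(k < n) c k * \prod_(i < r) qexp_fint (a k i).
Proof.
elim: r n c a => [|r IH] n c a /=; first by apply: eq_bigr => k _; rewrite !big_ord0.
have inner (y : nat) :
    fintn abs p r (fun ys => \sum_(k < n) c k * \prod_(i < r.+1)
       q ^ (a k i * (if (i : nat) == r then y else ys i)))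
    = \sum_(k < n) (c k * \prod_(i < r) qexp_fint (a k i)) * q ^ (a k r * y).
  under [X in fintn _ _ _ X]functional_extensionality => ys.
    under eq_bigr => k _ do rewrite big_ord_recr /= eqxx mulrA mulrAC.
    under eq_bigr => k _.
      under eq_bigr => i _ do rewrite (ltn_eqF (ltn_ord i)).
    over.
  over.
  rewrite (IH n (fun k => c k * q ^ (a k r * y))).
  by apply: eq_bigr => k _; rewrite mulrAC.
rewrite (functional_extensionality _ _ inner).
rewrite (@fint_sum_qexp n (fun k => c k * \prod_(i < r) qexp_fint (a k i)) (fun k => a k r)).
by apply: eq_bigr => k _; rewrite big_ord_recr /= mulrA.
Qed.

(* One factor of the product over l: the sum over j_l times the integral over y_l,
   where b = h - l + k collects the exponents. *)
Definition fermion_factor (w w' : nat) (b : int) : K :=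
  (\sum_(t < w) (-1) ^+ t * q ^ ((w' : int) * b * t)) * qexp_fint ((w : int) * b).

Lemma fermion_factorE w w' b : odd w ->
  fermion_factor w w' b = 2 * (1 + q ^ ((w : int) * w' * b))
                          / ((1 + q ^ ((w' : int) * b)) * (1 + q ^ ((w : int) * b))).
Proof.
move=> w_odd; rewrite /fermion_factor /qexp_fint.
have qw'b_neq0 := oneDexprqz_neq0 ((w' : int) * b).
have qwb_neq0 := oneDexprqz_neq0 ((w : int) * b).
under eq_bigr do rewrite -exprz_exp -exprnP.
rewrite alt_geom_sum //.
have -> : (q ^ ((w' : int) * b)) ^+ w = q ^ ((w : int) * w' * b).
  by rewrite exprnP exprz_exp; congr (q ^ _); ring.
by field; rewrite qw'b_neq0 qwb_neq0.
Qed.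

Lemma fermion_factorC w w' b : odd w -> odd w' ->
  fermion_factor w w' b = fermion_factor w' w b.
Proof.
move=> w_odd w'_odd; rewrite !fermion_factorE //.
by rewrite [(w' : int) * w]mulrC [(1 + _) * _]mulrC.
Qed.

(** * Closed form of the coefficients *)

Lemma qnum_natr n : qnum abs q n%:R = (1 - q ^+ n) / (1 - q).
Proof. by rewrite /qnum -[n%:R]/((n : int)%:~R) qpow_intr. Qed.

Lemma qnumw_shift (w w' J S : nat) x : (0 < w)%N -> in_Zp abs x ->
  qnumw abs q w (w'%:R * x + w'%:R / w%:R * J%:R + S%:R)
  = (1 - qpow abs q ((w * w')%:R * x) * q ^+ (w' * J) * q ^+ (w * S)) / (1 - q ^+ w).
Proof.
move=> w_gt0 Zpx; rewrite /qnumw.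
have -> : w%:R * (w'%:R * x + w'%:R / w%:R * J%:R + S%:R)
          = (w * w')%:R * x + ((w' * J + w * S)%N : int)%:~R.
  by rewrite -pmulrn natrD !natrM; field; rewrite natrK_eq0 -lt0n.
rewrite qpowD_intr; last exact: in_Zp_natrM.
by rewrite -[q ^ _]/(q ^+ (w' * J + w * S)) exprD mulrA.
Qed.

Lemma integrand_expand (w w' n J : nat) (h : int) (r : nat) x (ys : nat -> nat) :
  odd w -> q ^+ w != 1 -> in_Zp abs x ->
  qpow abs q (w%:R * (\sum_(i < r) (h - (i.+1 : int))%:~R * (ys i)%:R))
    * (qnum abs q w%:R * qnumw abs q w (w'%:R * x + w'%:R / w%:R * J%:R
                                        + \sum_(i < r) (ys i)%:R)) ^+ n / (n`!)%:R
  = \sum_(k < n.+1) ('C(n, k)%:R * (- (qpow abs q ((w * w')%:R * x) * q ^+ (w' * J))) ^+ k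
                      / ((1 - q) ^+ n * (n`!)%:R))
      * \prod_(i < r) q ^ ((w : int) * (h - (i.+1 : int) + k) * ys i).
Proof.
move=> w_odd qw_neq1 Zpx.
have q1_neq0 : 1 - q != 0.
  by apply: contraNneq qw_neq1 => /eqP; rewrite subr_eq0 => /eqP <-; rewrite expr1n.
have qw1_neq0 : 1 - q ^+ w != 0 by rewrite subr_eq0 eq_sym.
have -> : w%:R * (\sum_(i < r) (h - (i.+1 : int))%:~R * (ys i)%:R)
          = (\sum_(i < r) (w : int) * (h - (i.+1 : int)) * ys i)%:~R :> K.
  by rewrite rmorph_sum mulr_sumr; apply: eq_bigr => i _; rewrite !rmorphM /= mulrA.
rewrite qpow_intr qnum_natr -natr_sum qnumw_shift //; last by case: (w) w_odd.
set X := qpow abs q _; set S := (\sum_(i < r) ys i)%N.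
have -> : (1 - q ^+ w) / (1 - q) * ((1 - X * q ^+ (w' * J) * q ^+ (w * S)) / (1 - q ^+ w))
          = (1 - X * q ^+ (w' * J) * q ^+ (w * S)) / (1 - q).
  by field; rewrite q1_neq0 qw1_neq0.
rewrite expand_scaled_binomial; apply: eq_bigr => k _; congr (_ * _).
rewrite -exprM exprnP -expfzDr ?q_neq0 // -exprz_sum ?q_neq0 //; congr (q ^ _).
rewrite /S !PoszM Posz_sum mulr_sumr mulr_suml -big_split /=.
by apply: eq_bigr => i _; ring.
Qed.

Lemma side_coefE n h r w w' x : odd w -> q ^+ w != 1 -> in_Zp abs x ->
  side_coef abs p q h r w w' x n
  = \sum_(k < n.+1) ('C(n, k)%:R * (- qpow abs q ((w * w')%:R * x)) ^+ k
                      / ((1 - q) ^+ n * (n`!)%:R))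
      * \prod_(i < r) fermion_factor w w' (h - (i.+1 : int) + k).
Proof.
move=> w_odd qw_neq1 Zpx; rewrite /side_coef.
set X := qpow abs q ((w * w')%:R * x).
pose B k := 'C(n, k)%:R * (- X) ^+ k / ((1 - q) ^+ n * (n`!)%:R).
pose F (k i t : nat) := (-1) ^+ t * q ^ ((w' : int) * (h - (i.+1 : int) + k) * t)
                        * qexp_fint ((w : int) * (h - (i.+1 : int) + k)).
transitivity (\sum_(j : {ffun 'I_r -> 'I_w}) \sum_(k < n.+1) B k * \prod_(i < r) F k i (j i)).
  apply: eq_bigr => j _; rewrite -natr_sum.
  set J := (\sum_(i < r) (j i : nat))%N.
  rewrite (functional_extensionality _ _
             (fun ys => @integrand_expand w w' n J h r x ys w_odd qw_neq1 Zpx)).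
  rewrite (@fintn_sum_prod_qexp r n.+1
    (fun k => 'C(n, k)%:R * (- (X * q ^+ (w' * J))) ^+ k / ((1 - q) ^+ n * (n`!)%:R))
    (fun k i => (w : int) * (h - (i.+1 : int) + k))).
  rewrite mulr_sumr; apply: eq_bigr => k _.
  have jpowE : q ^ ((w' : int) * (\sum_(i < r) (h - (i.+1 : int)) * j i))
                 * (q ^+ (w' * J)) ^+ k
               = q ^ (\sum_(i < r) (w' : int) * (h - (i.+1 : int) + k) * j i).
    rewrite -exprM exprnP -expfzDr ?q_neq0 //; congr (q ^ _).
    rewrite /J !PoszM Posz_sum !mulr_sumr !mulr_suml -big_split /=.
    by apply: eq_bigr => i _; ring.
  rewrite /B /F !big_split /= -expr_sum -exprz_sum ?q_neq0 // -jpowE -mulNr exprMn; ring.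
rewrite exchange_big /=; apply: eq_bigr => k _; rewrite -mulr_sumr; congr (_ * _).
rewrite -(bigA_distr_bigA (fun (i : 'I_r) (t : 'I_w) => F k i t)).
by apply: eq_bigr => i _; rewrite /fermion_factor -mulr_suml.
Qed.

Lemma side_coefC n h r w1 w2 x : odd w1 -> odd w2 ->
  q ^+ w1 != 1 -> q ^+ w2 != 1 -> in_Zp abs x ->
  side_coef abs p q h r w1 w2 x n = side_coef abs p q h r w2 w1 x n.
Proof.
move=> w1_odd w2_odd qw1_neq1 qw2_neq1 Zpx; rewrite !side_coefE // mulnC.
by apply: eq_bigr => k _; congr (_ * _); apply: eq_bigr => i _; rewrite fermion_factorC.
Qed.

End PadicAbs.

Theorem theorem1 (R : realType) (K : fieldType) (abs : K -> R) (p : nat)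
    (Hp : prime p) (Hpodd : odd p) (Habs : padic_abs abs p)
    (q : K) (Hq : abs (1 - q) < 1)
    (h : int) (r w1 w2 : nat) (Hw1 : odd w1) (Hw2 : odd w2)
    (Hqw1 : q ^+ w1 != 1) (Hqw2 : q ^+ w2 != 1)
    (x : K) (Hx : in_Zp abs x) :
  forall n : nat,
    side_coef abs p q h r w1 w2 x n = side_coef abs p q h r w2 w1 x n.
Proof.
move=> n; case: Habs => K_char0 [abs_ge0 [abs_eq0 [absM [absD [absp_lt1 K_complete]]]]].
exact: side_coefC.
Qed.
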